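(* Let $G=\langle a,b\mid a^2b=ba^2\rangle$, let $\hat G$ be its pro-$2$ completion, and let $\hat H\subset\hat G$ be the kernel of the continuous homomorphism $\hat G\to\mathbb Z/2\mathbb Z$ sending $a\mapsto0$ and $b\mapsto1$ (equivalently, the pro-$2$ completion of the kernel $H$ of the corresponding homomorphism $G\to\mathbb Z/2\mathbb Z$). Then: (1) the reduction maps $H^1(\hat G,\mathbb Z/2^n\mathbb Z)\to H^1(\hat G,\mathbb Z/2\mathbb Z)$ are surjective for all $n\ge1$; (2) the reduction map $H^1(\hat H,\mathbb Z/4\mathbb Z)\to H^1(\hat H,\mathbb Z/2\mathbb Z)$ is not surjective; (3) there exist $\chi_1,\chi_2,\chi_3\in H^1(\hat G,\mathbb Z/2\mathbb Z)$ such that the mod 2 Massey product $\langle\chi_1,\chi_2,\chi_3\rangle$ is defined but does not vanish.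
   Context: All coefficient modules have trivial action. Massey products: for $a_1,\dots,a_n\in H^1$ of a differential graded ring $A$, a defining system is $a_{ij}\in A^1$ ($1\le i<j\le n+1$, $(i,j)\neq(1,n+1)$) with $\partial a_{i,i+1}=0$ representing $a_i$ and $\partial a_{ij}=-\sum_{l=i+1}^{j-1}a_{il}a_{lj}$; its value is the class of $-\sum_{l=2}^na_{1l}a_{l,n+1}$; $\langle a_1,\dots,a_n\rangle$ is the set of values, defined if nonempty, vanishing if it contains $0$. Mod 2 Massey products of $\hat G$ are taken in continuous cochains $C^*(\hat G,\mathbb Z/2\mathbb Z)$ with cup product. *)

From HB Require Import structures.
From mathcomp Require Import all_boot all_order all_algebra all_fingroup all_solvable.
Set Implicit Arguments. Unset Strict Implicit. Unset Printing Implicit Defensive.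
Import GRing.Theory.

(* Elements of G are represented by words in the free group on a, b:       *)
(* a letter (gen, inv) stands for a (gen = false) or b (gen = true),       *)
(* inverted when inv = true.  Words are multiplied by concatenation.       *)
Definition letter := (bool * bool)%type.
Definition word := seq letter.

Definition eval_letter (gT : finGroupType) (x y : gT) (l : letter) : gT :=
  let g := if l.1 then y else x in if l.2 then (g^-1)%g else g.
Definition eval_word (gT : finGroupType) (x y : gT) (w : word) : gT :=
  foldr (fun l acc => (eval_letter x y l * acc)%g) 1%g w.

(* (x, y) satisfies the defining relation of G in a finite 2-group gT,     *)
(* i.e. a |-> x, b |-> y defines a homomorphism from G onto a finite       *)
(* 2-group (a finite 2-quotient of G, i.e. a quotient of G^ by an open      *)
(* normal subgroup).                                                        *)
Definition two_quotient (gT : finGroupType) (x y : gT) : Prop :=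
  pgroup 2 [set: gT] /\ (x ^+ 2 * y = y * x ^+ 2)%g.

(* The homomorphism G -> Z/2, a |-> 0, b |-> 1 : parity of b-letters.      *)
Definition in_H (w : word) : bool := ~~ odd (count (fun l : letter => l.1) w).
Definition in_G (w : word) : bool := true.

(* Continuous cochains.  For S = in_G (resp. S = in_H) the words in S      *)
(* represent the dense subgroup G of G^ (resp. H of H^).  A continuous     *)
(* cochain on G^ (resp. H^) with values in a finite discrete module A is   *)
(* determined by its restriction to the dense subgroup, and a function on  *)
(* the dense subgroup extends continuously iff it factors through a finite *)
(* 2-quotient of G (continuity for the pro-2 topology).  Only the values   *)
(* on words in S matter.                                                   *)
Section Cochains.
Variables (S : pred word) (A : zmodType).

Definition cont1 (f : word -> A) : Prop :=
  exists (gT : finGroupType) (x y : gT) (g : gT -> A),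
    two_quotient x y /\ forall w, S w -> f w = g (eval_word x y w).

Definition cont2 (f : word -> word -> A) : Prop :=
  exists (gT : finGroupType) (x y : gT) (g : gT -> gT -> A),
    two_quotient x y /\
    forall w1 w2, S w1 -> S w2 -> f w1 w2 = g (eval_word x y w1) (eval_word x y w2).

(* differentials (trivial action); 0-cochains are constants c : A *)
Definition d0 (c : A) : word -> A := fun _ => (c - c)%R.
Definition d1 (f : word -> A) : word -> word -> A :=
  fun g h => (f h - f (g ++ h) + f g)%R.

Definition cocycle1 (f : word -> A) : Prop :=
  forall g h, S g -> S h -> d1 f g h = 0%R.
Definition cohom1 (f f' : word -> A) : Prop :=
  exists c : A, forall w, S w -> (f w - f' w)%R = d0 c w.
(* a continuous 1-cocycle, i.e. a representative of a class in H^1 *)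
Definition Z1 (f : word -> A) : Prop := cont1 f /\ cocycle1 f.
Definition coboundary2 (F : word -> word -> A) : Prop :=
  exists c : word -> A, cont1 c /\ forall g h, S g -> S h -> F g h = d1 c g h.
End Cochains.

Definition red2 (m : nat) (x : 'Z_m) : 'Z_2 := ((val x)%:R : 'Z_2)%R.

(* Massey products in C^*(G^, R) (cup product (f u g)(g1,g2) = f g1 * g g2)*)
(* chi = [:: chi_1; ...; chi_n] are 1-cocycles representing a_1..a_n.      *)
(* A defining system is a family a i j (1 <= i < j <= n+1, (i,j) <> (1,n+1))*)
Section Massey.
Variables (S : pred word) (R : comRingType).

Definition massey_defsys (chi : seq (word -> R)) (a : nat -> nat -> word -> R)
  : Prop :=
  let n := size chi in
  (forall i j, 1 <= i -> i < j -> j <= n.+1 -> (i, j) <> (1, n.+1) ->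
     cont1 S (a i j))%N /\
  (forall i, 1 <= i -> i <= n ->
     cocycle1 S (a i i.+1) /\ cohom1 S (a i i.+1) (nth (fun _ => 0%R) chi i.-1))%N /\
  (forall i j, 1 <= i -> i.+1 < j -> j <= n.+1 -> (i, j) <> (1, n.+1) ->
     forall g h, S g -> S h ->
       d1 (a i j) g h = (- \sum_(i.+1 <= l < j) a i l g * a l j h)%R)%N.

Definition massey_value (n : nat) (a : nat -> nat -> word -> R)
  : word -> word -> R :=
  fun g h => (- \sum_(2 <= l < n.+1) a 1%N l g * a l n.+1 h)%R.

Definition massey_defined (chi : seq (word -> R)) : Prop :=
  exists a, massey_defsys chi a.

Definition massey_vanishes (chi : seq (word -> R)) : Prop :=
  exists a, massey_defsys chi a /\ coboundary2 S (massey_value (size chi) a).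
End Massey.

From HB Require Import structures.
From mathcomp Require Import all_boot all_order all_algebra all_fingroup all_solvable.
From mathcomp Require Import ring.
Set Implicit Arguments. Unset Strict Implicit. Unset Printing Implicit Defensive.
Import GRing.Theory.

(** A continuous 1-cocycle with trivial coefficients is a homomorphism of G,
    determined by its values on a and b.  (1) Lift these values to Z/2^n: as
    Z/2^n is an abelian 2-group, a |-> X, b |-> Y is again a continuous
    homomorphism.  (2) Let z be the corner entry of the map from G to the
    unitriangular group U_3(F_2) sending a, b to the two elementary matrices.
    On H, where b occurs an even number of times, z is a homomorphism.  Since a^2
    commutes with b, a^2 = (b a b^-1)^2, so a lift psi of z to Z/4 would satisfy
    2 psi(a) = 2 psi(b a b^-1), forcing z(a) = z(b a b^-1); but these are 0 and 1.
    (3) Corner entries of two maps to U_3(F_2) form a defining system for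
    <chi_a, chi_a, chi_b>.  A cochain c bounding the value of any defining system
    obeys the multiplication rule of the (1,4) entry of a unitriangular 4 x 4
    matrix, and expanding c on both sides of a^2 b = b a^2 gives values that
    differ by 1 modulo 2. *)

Local Open Scope ring_scope.

Definition wa : word := [:: (false, false)].
Definition wb : word := [:: (true, false)].
Definition wbV : word := [:: (true, true)].

Section EvalWord.
Variables (gT : finGroupType) (x y : gT).

Lemma eval_word_cat w1 w2 :
  eval_word x y (w1 ++ w2) = (eval_word x y w1 * eval_word x y w2)%g.
Proof. by elim: w1 => [|l w1 IH] /=; rewrite ?mul1g // IH mulgA. Qed.

Lemma eval_word_morph (hT : finGroupType) (f : gT -> hT) :
  {morph f : u v / (u * v)%g} -> forall w, f (eval_word x y w) = eval_word (f x) (f y) w.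
Proof.
move=> fM.
have f1 : f 1%g = 1%g by apply: (@mulgI _ (f 1%g)); rewrite -fM !mulg1.
have fV u : f u^-1%g = (f u)^-1%g by apply: (@mulgI _ (f u)); rewrite -fM !mulgV.
by elim=> [|[[] []] w IH] //=; rewrite fM IH ?fV.
Qed.

Hypothesis xy_rel : two_quotient x y.

Lemma two_quotient_aab : eval_word x y (wa ++ wa ++ wb) = eval_word x y (wb ++ wa ++ wa).
Proof. by case: xy_rel => _; rewrite /= !mulg1 !mulgA expgS expg1. Qed.

Lemma two_quotient_sqr_conj :
  eval_word x y (wa ++ wa) = eval_word x y ((wb ++ wa ++ wbV) ++ wb ++ wa ++ wbV).
Proof.
case: xy_rel => _; rewrite /= !mulg1 expgS expg1 => rel.
by rewrite mulKg !mulgA -[(y * x * x)%g]mulgA -rel mulgK.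
Qed.

End EvalWord.

Section Cochains.
Variables (S : pred word) (A : zmodType).

Lemma cont1_eval_word (gT : finGroupType) (x y : gT) (p : gT -> A) :
  two_quotient x y -> cont1 S (fun w => p (eval_word x y w)).
Proof. by move=> xy_rel; exists gT, x, y, p. Qed.

Lemma cont1_eq (f : word -> A) w1 w2 : cont1 S f -> S w1 -> S w2 ->
  (forall (gT : finGroupType) (x y : gT), two_quotient x y ->
     eval_word x y w1 = eval_word x y w2) ->
  f w1 = f w2.
Proof. by move=> [gT [x [y [p [xy_rel fE]]]]] S1 S2 rel; rewrite !fE // rel. Qed.

Lemma d1_eq_opp (f : word -> A) g h s :
  d1 f g h = - s <-> f (g ++ h) = f g + f h + s.
Proof.
rewrite /d1 addrAC [f h + _]addrC; split=> [fE | ->]; last first.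
  by rewrite opprD addrA subrr add0r.
by rewrite -(subKr (f g + f h) (f (g ++ h))) fE opprK.
Qed.

Lemma cocycle1_cat (f : word -> A) g h :
  cocycle1 S f -> S g -> S h -> f (g ++ h) = f g + f h.
Proof. by move=> f_cocycle Sg Sh; rewrite -[RHS]addr0 -d1_eq_opp oppr0 f_cocycle. Qed.

Lemma cohom1E (f f' : word -> A) : cohom1 S f f' <-> forall w, S w -> f w = f' w.
Proof.
rewrite /cohom1 /d0; split=> [[c fE] w Sw | fE].
  by apply/eqP; rewrite -subr_eq0 fE // subrr.
by exists 0 => w Sw; rewrite fE // !subrr.
Qed.

End Cochains.

Section Characters.
Variable k : nat.

Lemma Z1_eval_word (S : pred word) (X Y : 'Z_k) :
  pgroup 2 [set: 'Z_k] -> Z1 S (eval_word X Y).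
Proof.
move=> two_group; split.
  by apply: (@cont1_eval_word _ _ _ X Y id); split=> //; apply: addrC.
by move=> g h _ _; rewrite -oppr0; apply/d1_eq_opp; rewrite eval_word_cat addr0.
Qed.

Lemma Z1_in_G_eval_word (chi : word -> 'Z_k) :
  Z1 in_G chi -> chi =1 eval_word (chi wa) (chi wb).
Proof.
move=> [chi_cont chi_cocycle].
have chi_cat g h : chi (g ++ h) = chi g + chi h.
  exact: cocycle1_cat chi_cocycle isT isT.
have chi0 : chi [::] = 0 by apply: (@addrI _ (chi [::])); rewrite -chi_cat addr0.
have chiV l : chi [:: (l, true)] = - chi [:: (l, false)].
  apply/eqP; rewrite -addr_eq0 -chi_cat -chi0; apply/eqP.
  by apply: (cont1_eq chi_cont) => // gT x y _; case: l; rewrite /= mulg1 mulVg.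
elim=> [|l w IH] /=; first by rewrite chi0.
by rewrite -cat1s chi_cat IH; congr (_ + _); case: l => [[] []]; rewrite /= ?chiV.
Qed.

End Characters.

Lemma pgroup_Zp_2exp n : (0 < n)%N -> pgroup 2 [set: 'Z_(2 ^ n)].
Proof.
move=> n_gt0; rewrite /pgroup cardsT card_ord Zp_cast ?pnatX //.
by rewrite -[X in (X < _)%N](expn0 2) ltn_exp2l.
Qed.

Section Reduction.
Variable k : nat.
Hypotheses (k_gt1 : (1 < k)%N) (two_dvd_k : (2 %| k)%N).

Lemma red2D : {morph @red2 k : u v / u + v}.
Proof.
have two_dvd : (2 %| (Zp_trunc k).+2)%N by rewrite Zp_cast.
have Z2_char : 2 \in [pchar 'Z_2] by exact: pchar_Fp.
move=> u v; rewrite /red2 -natrD /= -[LHS](GRing.natr_mod_pchar Z2_char).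
by rewrite modn_dvdm // (GRing.natr_mod_pchar Z2_char).
Qed.

Lemma red2_eval_word (X Y : 'Z_k) w : red2 (eval_word X Y w) = eval_word (red2 X) (red2 Y) w.
Proof. exact/eval_word_morph/red2D. Qed.

Definition lift2 (z : 'Z_2) : 'Z_k := (val z)%:R.

Lemma red2_lift2 z : red2 (lift2 z) = z.
Proof.
have valZk n : val (n%:R : 'Z_k) = (n %% k)%N by exact: val_Zp_nat.
rewrite /red2 /lift2 valZk modn_small ?natr_Zp //.
exact: leq_trans (ltn_ord z) k_gt1.
Qed.

End Reduction.

Lemma reduction_surjective n : (0 < n)%N -> forall chi : word -> 'Z_2, Z1 in_G chi ->
  exists psi : word -> 'Z_(2 ^ n), Z1 in_G psi /\ cohom1 in_G (fun w => red2 (psi w)) chi.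
Proof.
move=> n_gt0 chi chi_Z1.
have k_gt1 : (1 < 2 ^ n)%N by rewrite -[X in (X < _)%N](expn0 2) ltn_exp2l.
have two_dvd_k : (2 %| 2 ^ n)%N by rewrite -[X in (X %| _)%N](expn1 2) dvdn_exp2l.
exists (eval_word (lift2 (2 ^ n) (chi wa)) (lift2 (2 ^ n) (chi wb))).
split; first exact/Z1_eval_word/pgroup_Zp_2exp.
apply/cohom1E => w _.
by rewrite red2_eval_word // !red2_lift2 // -Z1_in_G_eval_word.
Qed.

Definition heis : Type := ('Z_2 * 'Z_2 * 'Z_2)%type.
HB.instance Definition _ := Finite.on heis.

(* (x, y, z) stands for the unitriangular matrix [[1, x, z], [0, 1, y], [0, 0, 1]] over F_2. *)
Definition heis_mul (u v : heis) : heis :=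
  (u.1.1 + v.1.1, u.1.2 + v.1.2, u.2 + v.2 + u.1.1 * v.1.2).
Definition heis_one : heis := (0, 0, 0).
Definition heis_inv (u : heis) : heis := (- u.1.1, - u.1.2, - u.2 + u.1.1 * u.1.2).

Lemma heis_mulA : associative heis_mul.
Proof. by move=> [[? ?] ?] [[? ?] ?] [[? ?] ?]; rewrite /heis_mul /=; congr (_, _, _); ring. Qed.
Lemma heis_mul1 : left_id heis_one heis_mul.
Proof. by move=> [[? ?] ?]; rewrite /heis_mul /=; congr (_, _, _); ring. Qed.
Lemma heis_mulV : left_inverse heis_one heis_inv heis_mul.
Proof. by move=> [[? ?] ?]; rewrite /heis_mul /=; congr (_, _, _); ring. Qed.

HB.instance Definition _ := Finite_isGroup.Build heis heis_mulA heis_mul1 heis_mulV.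

Lemma heis_mulE (u v : heis) : (u * v)%g = heis_mul u v.
Proof. by []. Qed.

Lemma heis_sqr (u : heis) : (u ^+ 2)%g = (0, 0, u.1.1 * u.1.2).
Proof.
have Z2_double (t : 'Z_2) : t + t = 0 by apply: addrr_pchar2; exact: pchar_Fp.
by case: u => [[? ?] ?]; rewrite expgS expg1 heis_mulE /heis_mul /= !Z2_double add0r.
Qed.

Lemma heis_two_quotient (x y : heis) : two_quotient x y.
Proof.
split; first by rewrite /pgroup cardsT !card_prod card_ord.
by rewrite heis_sqr !heis_mulE /heis_mul; congr (_, _, _) => /=; ring.
Qed.

Section HeisenbergCochains.
Variables (x y : heis).

Definition corner (w : word) : 'Z_2 := (eval_word x y w).2.

Lemma eval_word_heis1 w : (eval_word x y w).1.1 = eval_word x.1.1 y.1.1 w.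
Proof. exact: (@eval_word_morph _ x y _ (fun u : heis => u.1.1)). Qed.

Lemma eval_word_heis2 w : (eval_word x y w).1.2 = eval_word x.1.2 y.1.2 w.
Proof. exact: (@eval_word_morph _ x y _ (fun u : heis => u.1.2)). Qed.

Lemma corner_cat g h :
  corner (g ++ h) = corner g + corner h + eval_word x.1.1 y.1.1 g * eval_word x.1.2 y.1.2 h.
Proof. by rewrite -eval_word_heis1 -eval_word_heis2 /corner eval_word_cat. Qed.

Lemma cont1_corner S : cont1 S corner.
Proof. exact/cont1_eval_word/heis_two_quotient. Qed.

End HeisenbergCochains.

Definition chiA : word -> 'Z_2 := eval_word (1%R : 'Z_2) 0%R.
Definition chiB : word -> 'Z_2 := eval_word (0%R : 'Z_2) 1%R.

Lemma Z1_chiA S : Z1 S chiA. Proof. exact/Z1_eval_word/(pgroup_Zp_2exp (n := 1)). Qed.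
Lemma Z1_chiB S : Z1 S chiB. Proof. exact/Z1_eval_word/(pgroup_Zp_2exp (n := 1)). Qed.

Lemma chiB_odd w : chiB w = (odd (count (fun l : letter => l.1) w))%:R.
Proof.
elim: w => [|[[] []] w IH] //=; rewrite -/(chiB w) IH add0n.
all: by case: odd; apply/val_inj.
Qed.

Definition xA : heis := (1, 0, 0).
Definition yB : heis := (0, 1, 0).
Definition xAA : heis := (1, 1, 0).

Lemma Z1_in_H_corner : Z1 in_H (corner xA yB).
Proof.
split=> [|g h _ Hh]; first exact: cont1_corner.
rewrite -oppr0; apply/d1_eq_opp; rewrite corner_cat.
by rewrite [eval_word _ _ h]chiB_odd (negbTE Hh) mulr0.
Qed.

Lemma red2_eq_of_double (u v : 'Z_4) : u + u = v + v -> red2 u = red2 v.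
Proof.
case: u => [[|[|[|[|//]]]] ?]; case: v => [[|[|[|[|//]]]] ?] /(congr1 val) //= _.
all: by apply/val_inj.
Qed.

Lemma corner_not_liftable :
  ~ exists psi : word -> 'Z_4, Z1 in_H psi /\ cohom1 in_H (fun w => red2 (psi w)) (corner xA yB).
Proof.
move=> [psi [[psi_cont psi_cocycle] /cohom1E red_psi]].
pose u := wb ++ wa ++ wbV.
have psi_sqr : psi (wa ++ wa) = psi (u ++ u).
  by apply: (cont1_eq psi_cont) => //; exact: @two_quotient_sqr_conj.
rewrite [psi (wa ++ wa)](cocycle1_cat psi_cocycle) //
        [psi (u ++ u)](cocycle1_cat psi_cocycle) // in psi_sqr.
by move: (red2_eq_of_double psi_sqr); rewrite !red_psi // => /(congr1 val).
Qed.

Definition aab_defsys (i j : nat) : word -> 'Z_2 :=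
  match i, j with
  | 1, 2 | 2, 3 => chiA
  | 3, 4 => chiB
  | 1, 3 => corner xAA 1%g
  | 2, 4 => corner xA yB
  | _, _ => fun _ => 0
  end.

Lemma massey_defsys_aab : massey_defsys in_G [:: chiA; chiA; chiB] aab_defsys.
Proof.
split; [|split].
- move=> [|[|[|[|i]]]] [|[|[|[|[|j]]]]] //= _ _ _ ne;
    by [case: ne | apply: cont1_corner | apply: (proj1 (Z1_chiA _)) | apply: (proj1 (Z1_chiB _))].
- move=> [|[|[|[|i]]]] //= _ _; split;
    by [apply/cohom1E | apply: (proj2 (Z1_chiA _)) | apply: (proj2 (Z1_chiB _))].
- move=> [|[|[|[|i]]]] [|[|[|[|[|j]]]]] //= _ _ _ ne g h _ _;
    by [case: ne | apply/d1_eq_opp; rewrite big_nat1 corner_cat].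
Qed.

Section MasseyAAB.
Variables (R : comNzRingType) (chi1 chi2 chi3 : word -> R).
Hypothesis R_char2 : 2 \in [pchar R].

Lemma massey_nonvanishing :
  chi1 wa = 1 -> chi2 wa = 1 -> chi3 wa = 0 -> chi1 wb = 0 -> chi3 wb = 1 ->
  ~ massey_vanishes in_G [:: chi1; chi2; chi3].
Proof.
move=> chi1a chi2a chi3a chi1b chi3b [a [[_ [a_chi a_d1]] [c [c_cont c_d1]]]].
have /cohom1E /= a12 := (a_chi 1%N isT isT).2.
have /cohom1E /= a23 := (a_chi 2%N isT isT).2.
have /cohom1E /= a34 := (a_chi 3%N isT isT).2.
have a34_cat g h : a 3%N 4%N (g ++ h) = a 3%N 4%N g + a 3%N 4%N h.
  exact: (cocycle1_cat (a_chi 3%N isT isT).1).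
have a24_cat g h :
    a 2%N 4%N (g ++ h) = a 2%N 4%N g + a 2%N 4%N h + a 2%N 3%N g * a 3%N 4%N h.
  by apply/d1_eq_opp; rewrite (a_d1 2%N 4%N) // big_nat1.
have c_cat g h : c (g ++ h) =
    c g + c h + (a 1%N 2%N g * a 2%N 4%N h + a 1%N 3%N g * a 3%N 4%N h).
  by apply/d1_eq_opp; rewrite -c_d1 // /massey_value big_ltn // big_nat1.
have c_aab :
    c (wa ++ wa ++ wb) = 1 + (c wb + a 2%N 4%N wa) + (c wa + a 2%N 4%N wb + a 1%N 3%N wa) *+ 2.
  rewrite !c_cat !a24_cat !a34_cat !a12 // !a23 // !a34 // chi1a chi2a chi3a chi3b.
  ring.
have c_baa : c (wb ++ wa ++ wa) = (c wb + a 2%N 4%N wa) + c wa *+ 2.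
  rewrite !c_cat !a24_cat !a34_cat !a12 // !a23 // !a34 // chi1a chi1b chi3a.
  ring.
have := cont1_eq c_cont isT isT (@two_quotient_aab).
rewrite c_aab c_baa !(mulrn_pchar R_char2) !addr0.
by rewrite -[X in _ = X]add0r => /addIr /eqP; rewrite oner_eq0.
Qed.
End MasseyAAB.

Local Close Scope ring_scope.

Theorem proposition8p1 :
  (* (1) H^1(G^, Z/2^n) -> H^1(G^, Z/2) surjective for all n >= 1 *)
  (forall n : nat, (1 <= n)%N ->
     forall chi : word -> 'Z_2, Z1 in_G chi ->
       exists psi : word -> 'Z_(2 ^ n), Z1 in_G psi /\
         cohom1 in_G (fun w => red2 (psi w)) chi) /\
  (* (2) H^1(H^, Z/4) -> H^1(H^, Z/2) not surjective *)
  (exists chi : word -> 'Z_2, Z1 in_H chi /\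
     ~ exists psi : word -> 'Z_4, Z1 in_H psi /\
         cohom1 in_H (fun w => red2 (psi w)) chi) /\
  (* (3) a defined but non-vanishing mod 2 triple Massey product *)
  (exists chi1 chi2 chi3 : word -> 'Z_2,
     [/\ Z1 in_G chi1, Z1 in_G chi2, Z1 in_G chi3,
         massey_defined in_G [:: chi1; chi2; chi3]
       & ~ massey_vanishes in_G [:: chi1; chi2; chi3]]).
Proof.
split; [exact: reduction_surjective | split].
  exists (corner xA yB); split; [exact: Z1_in_H_corner | exact: corner_not_liftable].
exists chiA, chiA, chiB; split; [exact: Z1_chiA | exact: Z1_chiA | exact: Z1_chiB | |].
  by exists aab_defsys; exact: massey_defsys_aab.
by apply: massey_nonvanishing; [exact: pchar_Fp | apply/val_inj ..].
Qed.
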